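(* Consider energy plus total flow time minimization with $\alpha=2$. Let $\mathcal{K}$ be a set of $n$ jobs, each of unit processing time, all released at the same time $t\ge0$. Then $$\tfrac43 n^{3/2}\le\mathtt{OPT}(\mathcal{K})\le\tfrac43 n^{3/2}+o(n^{3/2})\quad(n\to\infty).$$
   Context: Single machine; a feasible schedule assigns speeds $s_j(t)\ge0$ (zero before the release time $r_j$, $\int s_j=p_j$); energy $E(S)=\int(\sum_js_j(t))^\alpha dt$. Energy plus flow time: $\mathrm{cost}(S,\mathcal{J})=E(S)+\sum_{j}(c_j^S-r_j)$ with $c_j^S$ the completion time of $j$; $\mathtt{OPT}$ is the minimum cost over feasible schedules. *)

From HB Require Import structures.
From mathcomp Require Import all_boot all_order all_algebra.
From mathcomp Require Import all_classical all_reals all_analysis.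
Set Implicit Arguments. Unset Strict Implicit. Unset Printing Implicit Defensive.
Import Order.TTheory GRing.Theory Num.Theory.
Local Open Scope classical_set_scope.
Local Open Scope ring_scope.

Section Sched.
Variable R : realType.

(* A schedule for n jobs: s j t is the speed of job j at time t. *)
Definition feasible (n : nat) (r p : 'I_n -> R) (s : 'I_n -> R -> R) : Prop :=
  forall j : 'I_n,
    measurable_fun [set: R] (s j) /\
    (forall t, 0 <= s j t) /\
    (forall t, t < r j -> s j t = 0) /\
    (\int[@lebesgue_measure R]_(t in [set: R]) (s j t)%:E = (p j)%:E)%E.

Definition energy (n : nat) (alpha : R) (s : 'I_n -> R -> R) : \bar R :=
  (\int[@lebesgue_measure R]_(t in [set: R]) ((\sum_(j < n) s j t) `^ alpha)%:E)%E.

(* completion time: first time at which the processed work of j reaches p_j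
   (+oo if never reached) *)
Definition completion (n : nat) (p : 'I_n -> R) (s : 'I_n -> R -> R) (j : 'I_n)
  : \bar R :=
  ereal_inf [set u%:E | u in
     [set u : R | (\int[@lebesgue_measure R]_(t in `]-oo, u]) (s j t)%:E
                   = (p j)%:E)%E]].

Definition cost (n : nat) (alpha : R) (r p : 'I_n -> R) (s : 'I_n -> R -> R)
  : \bar R :=
  (energy alpha s + \sum_(j < n) (completion p s j - (r j)%:E))%E.

Definition OPT (n : nat) (alpha : R) (r p : 'I_n -> R) : \bar R :=
  ereal_inf [set cost alpha r p s | s in [set s | feasible r p s]].

End Sched.

From HB Require Import structures.
From mathcomp Require Import all_boot all_order all_algebra.
From mathcomp Require Import all_classical all_reals all_analysis.
From mathcomp Require Import ring lra zify.
Import Order.TTheory GRing.Theory Num.Theory.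
Import measurable_realfun.
Set Implicit Arguments.
Unset Strict Implicit.
Unset Printing Implicit Defensive.
Local Open Scope classical_set_scope.
Local Open Scope ring_scope.

(* Upper bound: process the jobs one after another, running the job started when
   [m] jobs remain at speed [sqrt m]; energy and total flow time then both equal
   [sum_(m <= n) sqrt m <= 2/3 n^(3/2) + sqrt n].
   Lower bound: with [S] the total speed and [N] the number of unfinished jobs,
   cost = int (S^2 + N) >= int 2 S sqrt N.  The unit of work of a job [j] is done
   while every job finishing no earlier than [j] is unfinished, so it contributes
   at least [2 sqrt (rank j)], and [sum_(k <= n) sqrt k >= 2/3 n^(3/2)]. *)

Definition sqrt_antider {R : realType} (x : R) : R := 2 / 3 * (x * Num.sqrt x).

Section SqrtSums.
Variable R : realType.

Lemma powR_3half (x : R) : 0 <= x -> x `^ (3 / 2) = x * Num.sqrt x.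
Proof.
move=> x0; have -> : (3 / 2 : R) = 1 + 2^-1 by field.
by rewrite powRD ?powRr1 ?powR12_sqrt //; apply/implyP => /eqP; lra.
Qed.

Lemma sqrt_antider_twice (x : R) : 0 <= x -> sqrt_antider x *+ 2 = 4 / 3 * x `^ (3 / 2).
Proof. by move=> x_ge0; rewrite powR_3half // /sqrt_antider; field. Qed.

Section Step.
Variable m : R.
Hypothesis m_ge0 : 0 <= m.

Let sqrt_facts :
  [/\ 0 <= Num.sqrt m, Num.sqrt m ^+ 2 = m, Num.sqrt (m + 1) ^+ 2 = m + 1
    & Num.sqrt m <= Num.sqrt (m + 1)].
Proof.
have m1_ge0 : 0 <= m + 1 by rewrite addr_ge0.
by rewrite sqrtr_ge0 !sqr_sqrtr // ler_wsqrtr // lerDl.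
Qed.

Lemma sqrt_antiderS_le : sqrt_antider (m + 1) <= sqrt_antider m + Num.sqrt (m + 1).
Proof.
have [] := sqrt_facts; rewrite /sqrt_antider.
set a := Num.sqrt m; set b := Num.sqrt (m + 1) => a0 a2 b2 ab.
have : 0 <= (b - a) ^+ 2 * (b + 2 * a) by apply: mulr_ge0; [exact: sqr_ge0|lra].
rewrite -a2 in b2 *; clearbody a b; nra.
Qed.

Lemma sqrt_antiderS_ge : sqrt_antider m + Num.sqrt m <= sqrt_antider (m + 1).
Proof.
have [] := sqrt_facts; rewrite /sqrt_antider.
set a := Num.sqrt m; set b := Num.sqrt (m + 1) => a0 a2 b2 ab.
have : 0 <= (b - a) ^+ 2 * (2 * b + a) by apply: mulr_ge0; [exact: sqr_ge0|lra].
rewrite -a2 in b2 *; clearbody a b; nra.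
Qed.

End Step.

Lemma sum_sqrt_nat_le m :
  \sum_(i < m) Num.sqrt (i.+1%:R : R) <= sqrt_antider (m%:R : R) + Num.sqrt m%:R.
Proof.
elim: m => [|m IH]; first by rewrite big_ord0 /sqrt_antider mul0r mulr0 sqrtr0 addr0.
rewrite big_ord_recr /= -natr1.
by have := @sqrt_antiderS_ge m%:R (ler0n R m); move: IH; lra.
Qed.

Lemma sorted_sum_sqrt_rank_ge (s : seq R) : sorted <=%R s ->
  sqrt_antider ((size s)%:R : R) <= \sum_(x <- s) Num.sqrt (\sum_(y <- s) ((x <= y)%R)%:R).
Proof.
elim: s => [|x s IH] /= s_sorted; first by rewrite big_nil /sqrt_antider mul0r mulr0.
have x_min := order_path_min le_trans s_sorted.
have {}IH := IH (path_sorted s_sorted).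
have rank_x : \sum_(y <- s) ((x <= y)%R)%:R = (size s)%:R :> R.
  elim: s {IH s_sorted} x_min => [|z s IHs] /=; first by rewrite big_nil.
  by rewrite big_cons => /andP[-> /IHs ->]; rewrite -natr1 addrC.
have rank_mono : \sum_(z <- s) Num.sqrt (\sum_(y <- s) ((z <= y)%R)%:R) <=
    \sum_(z <- s) Num.sqrt (((z <= x)%R)%:R + \sum_(y <- s) ((z <= y)%R)%:R) :> R.
  apply: ler_sum => z _; apply: ler_wsqrtr; rewrite lerDr; by case: (z <= x).
rewrite big_cons big_cons lexx rank_x.
under [X in _ <= _ + X]eq_bigr do rewrite big_cons.
rewrite [true%:R + _]addrC -natr1.
by have := @sqrt_antiderS_le (size s)%:R (ler0n R _); move: IH; lra.
Qed.

Lemma sum_sqrt_rank_ge_seq (s : seq R) :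
  sqrt_antider ((size s)%:R : R) <= \sum_(x <- s) Num.sqrt (\sum_(y <- s) ((x <= y)%R)%:R).
Proof.
have s_perm : perm_eq (sort <=%R s) s by rewrite perm_sort.
have := @sorted_sum_sqrt_rank_ge _ (sort_sorted le_total s).
rewrite (perm_size s_perm) (perm_big _ s_perm).
by under eq_bigr do rewrite (perm_big _ s_perm).
Qed.

Lemma sum_sqrt_rank_ge n (c : 'I_n -> R) :
  sqrt_antider (n%:R : R) <= \sum_(j < n) Num.sqrt (\sum_(i < n) ((c j <= c i)%R)%:R).
Proof.
have := sum_sqrt_rank_ge_seq (map c (enum 'I_n)).
rewrite size_map size_enum_ord big_map enumT.
under eq_bigr do rewrite big_map.
by rewrite unlock.
Qed.

End SqrtSums.

Notation mu := (@lebesgue_measure _).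

Section Lebesgue.
Variable R : realType.

Lemma indic_ge0 (A : set R) x : 0 <= \1_A x :> R.
Proof. by rewrite indicE ler0n. Qed.

Lemma indic_sqr (A : set R) x : \1_A x ^+ 2 = \1_A x :> R.
Proof. by rewrite indicE; case: (x \in A); rewrite ?expr1n ?expr0n. Qed.

Lemma integral_scaled_indic (D A : set R) (c : R) :
  measurable D -> measurable A -> 0 <= c ->
  (\int[mu]_(x in D) (c * \1_A x)%:E = c%:E * mu (A `&` D))%E.
Proof.
move=> mD mA c0; under eq_integral do rewrite EFinM.
rewrite ge0_integralZl_EFin //; first by rewrite integral_indic.
by apply/measurable_EFinP; exact: measurable_indic.
Qed.

Lemma lebesgue_measure_itv_co (a b : R) : a < b -> mu `[a, b[ = (b - a)%:E.
Proof. by move=> ab; rewrite lebesgue_measure_itv /= lte_fin ab -EFinD. Qed.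

End Lebesgue.

Lemma sqr_sum_orthogonal (R : comPzRingType) n (x : 'I_n -> R) :
  (forall j k, j != k -> x j * x k = 0) ->
  (\sum_j x j) ^+ 2 = \sum_j x j ^+ 2.
Proof.
move=> xjk; rewrite expr2 mulr_suml; apply: eq_bigr => j _.
rewrite mulr_sumr (bigD1 j) //= big1 ?addr0 ?expr2 // => k kj.
by apply: xjk; rewrite eq_sym.
Qed.

Lemma sum_nat_triangle (R : comPzRingType) (f : nat -> R) n :
  \sum_(0 <= j < n) \sum_(0 <= i < j.+1) f i = \sum_(0 <= i < n) (n - i)%:R * f i.
Proof.
elim: n => [|n IH]; first by rewrite !big_geq.
rewrite big_nat_recr //= IH [RHS]big_nat_recr //= subSnn mul1r.
rewrite big_nat_recr //= addrA; congr (_ + _).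
rewrite -big_split /=; apply: eq_big_nat => i /andP[_ lt_in].
by rewrite subSn ?(ltnW lt_in) // -natr1 mulrDl mul1r.
Qed.

Section SequentialSchedule.
Variables (R : realType) (n : nat) (t : R).

Definition seq_speed (i : nat) : R := Num.sqrt (n - i)%:R.
Definition seq_start (k : nat) : R := t + \sum_(0 <= i < k) (seq_speed i)^-1.
Definition seq_slot (k : nat) : set R := `[seq_start k, seq_start k.+1[.
Definition seq_schedule (j : 'I_n) (u : R) : R := seq_speed j * \1_(seq_slot j) u.

Lemma seq_speed_gt0 (i : nat) : (i < n)%N -> 0 < seq_speed i.
Proof. by move=> lt_in; rewrite sqrtr_gt0 ltr0n subn_gt0. Qed.

Lemma seq_speed_ge0 (i : nat) : 0 <= seq_speed i.
Proof. exact: sqrtr_ge0. Qed.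

Lemma seq_speed_sqr (i : nat) : seq_speed i ^+ 2 = (n - i)%:R.
Proof. exact: sqr_sqrtr. Qed.

Lemma seq_startS k : seq_start k.+1 = seq_start k + (seq_speed k)^-1.
Proof. by rewrite /seq_start big_nat_recr //= addrA. Qed.

Lemma seq_start_ge k : t <= seq_start k.
Proof. by rewrite lerDl; apply: sumr_ge0 => i _; rewrite invr_ge0 seq_speed_ge0. Qed.

Lemma seq_start_mono : {homo seq_start : k l / (k <= l)%N >-> k <= l}.
Proof.
move=> k l kl; rewrite /seq_start lerD2l (big_cat_nat (leq0n k) kl) /= lerDl.
by apply: sumr_ge0 => i _; rewrite invr_ge0 seq_speed_ge0.
Qed.

Lemma seq_slot_measure (j : 'I_n) : mu (seq_slot j) = ((seq_speed j)^-1)%:E.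
Proof.
rewrite lebesgue_measure_itv_co seq_startS; first by congr (_%:E); ring.
by rewrite ltrDl invr_gt0 seq_speed_gt0.
Qed.

Lemma seq_slot_disjoint (j k : 'I_n) u : j != k ->
  \1_(seq_slot j) u * \1_(seq_slot k) u = 0 :> R.
Proof.
wlog jk : j k / (j < k)%N => [wlog_jk|_].
  case: (ltngtP j k) => [jk|kj|/val_inj ->]; last by rewrite eqxx.
    exact: wlog_jk.
  by move=> jk; rewrite mulrC wlog_jk // eq_sym.
rewrite !indicE; case: (boolP (u \in seq_slot j)) => [uj|_]; last by rewrite mul0r.
case: (boolP (u \in seq_slot k)) => [uk|_]; last by rewrite mulr0.
move: uj uk; rewrite /seq_slot !in_setE /= !in_itv /= => /andP[_ uj] /andP[ku _].
by have := @seq_start_mono j.+1 k jk; lra.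
Qed.

Lemma measurable_seq_schedule (j : 'I_n) : measurable_fun [set: R] (seq_schedule j).
Proof. by apply: measurable_funM => //; apply: measurable_indic; exact: measurable_itv. Qed.

Lemma seq_work_in_slot (D : set R) (j : 'I_n) : measurable D -> seq_slot j `<=` D ->
  (\int[mu]_(u in D) (seq_schedule j u)%:E = 1%:E)%E.
Proof.
move=> mD slotD; rewrite integral_scaled_indic ?seq_speed_ge0 //; last exact: measurable_itv.
by rewrite setIidl // seq_slot_measure -EFinM divff // gt_eqF // seq_speed_gt0.
Qed.

Lemma seq_schedule_feasible : feasible (fun=> t) (fun=> 1%R) seq_schedule.
Proof.
move=> j; split; [|split; [|split]].
- exact: measurable_seq_schedule.
- by move=> u; apply: mulr_ge0; [exact: seq_speed_ge0|exact: indic_ge0].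
- move=> u ut; rewrite /seq_schedule indicE memNset ?mulr0 // /seq_slot /= in_itv /=.
  by move=> /andP[ju _]; have := seq_start_ge j; lra.
- exact: seq_work_in_slot.
Qed.

Lemma seq_completion_le (j : 'I_n) :
  (completion (fun=> 1%R) seq_schedule j <= (seq_start j.+1)%:E)%E.
Proof.
apply: ereal_inf_lbound; exists (seq_start j.+1) => //=.
by apply: seq_work_in_slot => // u /=; rewrite !in_itv /= => /andP[_ /ltW].
Qed.

Lemma seq_energy : energy 2 seq_schedule = (\sum_(j < n) seq_speed j)%:E.
Proof.
transitivity (\int[mu]_(u in [set: R])
   (\sum_(j < n) (seq_speed j ^+ 2 * \1_(seq_slot j) u)%:E))%E.
  apply: eq_integral => u _; rewrite sumEFin powR_mulrn; last first.
    by apply: sumr_ge0 => j _; apply: mulr_ge0; [exact: seq_speed_ge0|exact: indic_ge0].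
  rewrite sqr_sum_orthogonal => [|j k jk]; last first.
    by rewrite /seq_schedule mulrACA seq_slot_disjoint // mulr0.
  by congr (_%:E); apply: eq_bigr => j _; rewrite exprMn indic_sqr.
rewrite ge0_integral_sum // => [|j|j u _]; last 2 first.
- apply/measurable_EFinP; apply: measurable_funM => //.
  by apply: measurable_indic; exact: measurable_itv.
- by rewrite lee_fin mulr_ge0 ?exprn_ge0 ?seq_speed_ge0 ?indic_ge0.
rewrite -sumEFin; apply: eq_bigr => j _.
rewrite integral_scaled_indic ?exprn_ge0 ?seq_speed_ge0 //; last exact: measurable_itv.
rewrite setIT seq_slot_measure.
by rewrite -EFinM expr2 -mulrA divff ?mulr1 // gt_eqF // seq_speed_gt0.
Qed.

(* Slot [i], of length [1 / sqrt (n - i)], delays the [n - i] jobs [j >= i]. *)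
Lemma seq_sum_completion : \sum_(j < n) (seq_start j.+1 - t) = \sum_(j < n) seq_speed j.
Proof.
under eq_bigr do rewrite /seq_start addrC addKr.
rewrite -(big_mkord xpredT (fun j => \sum_(0 <= i < j.+1) (seq_speed i)^-1)).
rewrite sum_nat_triangle -(big_mkord xpredT seq_speed).
apply: eq_big_nat => i /andP[_ lt_in].
by rewrite -seq_speed_sqr expr2 -mulrA divff ?mulr1 // gt_eqF // seq_speed_gt0.
Qed.

Lemma seq_cost_le :
  (cost 2 (fun=> t) (fun=> 1%R) seq_schedule <= (2 * \sum_(j < n) seq_speed j)%:E)%E.
Proof.
rewrite /cost seq_energy mulr2n mulrDl mul1r EFinD leeD2l //.
rewrite -seq_sum_completion -sumEFin; apply: lee_sum => j _.
have := seq_completion_le j; rewrite EFinB.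
by case: (completion _ _ j) => [c| |] //=; rewrite ?lee_fin ?leNye // => cj; lra.
Qed.

Lemma sum_seq_speed_le :
  \sum_(j < n) seq_speed j <= sqrt_antider (n%:R : R) + Num.sqrt n%:R.
Proof.
rewrite (reindex_inj rev_ord_inj) /=.
rewrite (eq_bigr (fun j : 'I_n => Num.sqrt (j.+1%:R : R))); first exact: sum_sqrt_nat_le.
by move=> j _; rewrite /seq_speed; congr (Num.sqrt _%:R); have := ltn_ord j; lia.
Qed.

End SequentialSchedule.

Section LowerBound.
Variables (R : realType) (n : nat) (t : R) (s : 'I_n -> R -> R).
Hypothesis s_feasible : feasible (fun=> t) (fun=> 1%R) s.

Lemma feasible_speed_ge0 (j : 'I_n) (u : R) : 0 <= s j u.
Proof. by have [_ [h _]] := s_feasible j; exact: h. Qed.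

Lemma measurable_feasible_speed (j : 'I_n) : measurable_fun [set: R] (s j).
Proof. by have [h _] := s_feasible j. Qed.

Lemma feasible_speed_before_release (j : 'I_n) (u : R) : u < t -> s j u = 0.
Proof. by have [_ [_ [h _]]] := s_feasible j; exact: h. Qed.

#[local] Hint Resolve feasible_speed_ge0 measurable_feasible_speed : core.

Definition total_speed u : R := \sum_(j < n) s j u.

Lemma measurable_total_speed : measurable_fun [set: R] total_speed.
Proof. by apply: measurable_sum => j; exact: measurable_feasible_speed. Qed.

Lemma release_le_completion j : (t%:E <= completion (fun=> 1%R) s j)%E.
Proof.
apply/ereal_infP => _ [u work_u <-]; rewrite lee_fin leNgt; apply/negP => ut.
move: work_u => /=; rewrite integral0_eq => [/esym/eqP|x /=]; first by rewrite eqe oner_eq0.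
by rewrite in_itv /= => xu; rewrite feasible_speed_before_release //; exact: le_lt_trans ut.
Qed.

Lemma energy2E : energy 2 s = (\int[mu]_(u in [set: R]) (total_speed u ^+ 2)%:E)%E.
Proof.
apply: eq_integral => u _; rewrite powR_mulrn //.
by apply: sumr_ge0 => j _; exact: feasible_speed_ge0.
Qed.

Section FiniteCompletions.
Variables (c : 'I_n -> R) (d : R).
Hypothesis completionE : forall j, completion (fun=> 1%R) s j = (c j)%:E.
Hypothesis d_gt0 : 0 < d.

Lemma release_le_c j : t <= c j.
Proof. by have := release_le_completion j; rewrite completionE lee_fin. Qed.

(* [active u] counts the jobs not yet completed (up to the slack [d]) at time [u]. *)
Definition active u := \sum_(i < n) \1_(`[t, c i + d]) u : R.

Lemma active_ge0 u : 0 <= active u.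
Proof. by apply: sumr_ge0 => i _; exact: indic_ge0. Qed.

Lemma measurable_active : measurable_fun [set: R] active.
Proof. by apply: measurable_sum => i; exact: measurable_indic. Qed.

Lemma measurable_sqrt_active : measurable_fun [set: R] (fun u => Num.sqrt (active u)).
Proof.
exact: measurableT_comp (continuous_measurable_fun (@sqrt_continuous R)) measurable_active.
Qed.

#[local] Hint Resolve active_ge0 measurable_active measurable_sqrt_active : core.

Lemma flow_time_integral :
  \sum_(j < n) ((c j + d - t)%:E) = (\int[mu]_(u in [set: R]) (active u)%:E)%E.
Proof.
under [RHS]eq_integral do rewrite -sumEFin.
rewrite ge0_integral_sum // => [|i]; last first.
  by apply/measurable_EFinP; exact: measurable_indic.
apply: eq_bigr => i _; rewrite integral_indic // setIT.
apply: esym; apply: (eq_trans (lebesgue_measure_itv _)) => /=.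
by rewrite lte_fin ifT -?EFinD //; have := release_le_c i; move: d_gt0; lra.
Qed.

Lemma work_before_completion j :
  (1 <= \int[mu]_(u in `]-oo, (c j + d)%R]) (s j u)%:E)%E.
Proof.
have : completion (fun=> 1%R) s j \is a fin_num by rewrite completionE.
move/(lb_ereal_inf_adherent d_gt0) => [_ [u work_u <-]].
rewrite -/(completion _ s j) completionE -EFinD lte_fin => ucd.
rewrite -[X in (X <= _)%E]work_u; apply: ge0_subset_integral => //.
- apply/measurable_EFinP; exact: measurable_funS measurableT (@subsetT _ _) (measurable_feasible_speed j).
- by move=> x _; rewrite lee_fin.
- by move=> x /=; rewrite !in_itv /=; lra.
Qed.

Lemma rank_le_active {j u} : t <= u -> u <= c j + d ->
  \sum_(i < n) ((c j <= c i)%R)%:R <= active u.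
Proof.
move=> tu ucd; apply: ler_sum => i _; case: (boolP (c j <= c i)%R) => cji.
  by rewrite indicE mem_set //= in_itv /=; apply/andP; split => //; lra.
exact: indic_ge0.
Qed.

Lemma weighted_work_ge j :
  ((2 * Num.sqrt (\sum_(i < n) ((c j <= c i)%R)%:R))%:E <=
  \int[mu]_(u in [set: R]) (2 * s j u * Num.sqrt (active u))%:E)%E.
Proof.
set M := \sum_(i < n) _; pose D := [set` `]-oo, c j + d]] : set R.
have mD : measurable D by exact: measurable_itv.
have ms : measurable_fun D (s j) by exact: measurable_funS measurableT (@subsetT _ D) _.
have mf : measurable_fun [set: R] (fun u => 2 * s j u * Num.sqrt (active u)).
  by apply: measurable_funM => //; apply: measurable_funM.
apply: (@le_trans _ _ (\int[mu]_(u in D) (2 * s j u * Num.sqrt (active u))%:E)%E); last first.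
  apply: ge0_subset_integral => //; first by apply/measurable_EFinP.
  by move=> u _; rewrite lee_fin !mulr_ge0 ?sqrtr_ge0.
apply: (@le_trans _ _ (\int[mu]_(u in D) ((2 * Num.sqrt M)%:E * (s j u)%:E))%E).
  rewrite ge0_integralZl //.
  - rewrite -[X in (X <= _)%E]mule1; apply: lee_pmul => //; last exact: work_before_completion.
  - exact/measurable_EFinP.
  - by move=> u _; rewrite lee_fin.
apply: ge0_le_integral => //.
- by move=> u _; rewrite -EFinM lee_fin !mulr_ge0 // sqrtr_ge0.
- by apply: emeasurable_funM => //; exact/measurable_EFinP.
- by apply/measurable_EFinP; exact: measurable_funS measurableT (@subsetT _ D) mf.
move=> u; rewrite /D /= in_itv /= => ucd; rewrite -EFinM lee_fin.
have [ut|tu] := ltP u t; first by rewrite feasible_speed_before_release // !(mulr0, mul0r).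
have := ler_wsqrtr (rank_le_active tu ucd : M <= _); have := feasible_speed_ge0 j u; nra.
Qed.

Lemma cost_ge_with_slack :
  ((sqrt_antider n%:R *+ 2)%:E <= energy 2 s + \sum_(j < n) (c j + d - t)%R%:E)%E.
Proof.
have measurable_sqr_speed := measurable_funX 2 measurable_total_speed.
have measurable_weighted : measurable_fun [set: R]
    (fun u => 2 * total_speed u * Num.sqrt (active u)).
  by apply: measurable_funM => //; apply: measurable_funM => //; exact: measurable_total_speed.
rewrite flow_time_integral energy2E -ge0_integralD //; last 4 first.
- by move=> u _; rewrite lee_fin sqr_ge0.
- exact/measurable_EFinP.
- by move=> u _; rewrite lee_fin.
- exact/measurable_EFinP.
apply: (@le_trans _ _ (\int[mu]_(u in [set: R])
   (2 * total_speed u * Num.sqrt (active u))%:E)%E); last first.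
  apply: ge0_le_integral => //.
  - by move=> u _; rewrite lee_fin !mulr_ge0 ?sqrtr_ge0 ?sumr_ge0.
  - exact/measurable_EFinP.
  - by apply/measurable_EFinP; exact: measurable_funD.
  (* AM-GM: [2 S sqrt N <= S^2 + N] *)
  move=> u _; rewrite lee_fin.
  have := sqr_sqrtr (active_ge0 u); have := sqr_ge0 (total_speed u - Num.sqrt (active u)).
  nra.
have -> : (\int[mu]_(u in [set: R]) (2 * total_speed u * Num.sqrt (active u))%:E =
    \int[mu]_(u in [set: R]) \sum_(j < n) (2 * s j u * Num.sqrt (active u))%:E)%E.
  by apply: eq_integral => u _; rewrite sumEFin /total_speed mulr_sumr mulr_suml.
rewrite ge0_integral_sum //; last 2 first.
- move=> j; apply/measurable_EFinP.
  by apply: measurable_funM => //; apply: measurable_funM => //; exact: measurable_feasible_speed.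
- by move=> j u _; rewrite lee_fin !mulr_ge0 ?sqrtr_ge0.
apply: (@le_trans _ _ (\sum_(j < n) (2 * Num.sqrt (\sum_(i < n) ((c j <= c i)%R)%:R))%:E)%E).
  rewrite sumEFin lee_fin -mulr_sumr -[X in X <= _]mulr_natl.
  by rewrite ler_pM2l //; exact: sum_sqrt_rank_ge.
by apply: lee_sum => j _; exact: weighted_work_ge.
Qed.

End FiniteCompletions.

Lemma cost_ge : ((sqrt_antider n%:R *+ 2)%:E <= cost 2 (fun=> t) (fun=> 1%R) s)%E.
Proof.
have energy_ge0 : (0 <= energy 2 s)%E by apply: integral_ge0 => u _; rewrite lee_fin powR_ge0.
have [[j completion_j]|finite_completions] :=
  pselect (exists j, completion (fun=> 1%R) s j = +oo%E).
  rewrite /cost (_ : \sum_(j < n) _ = +oo)%E ?addey ?leey // ?gt_eqF //.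
    by apply: lt_le_trans energy_ge0; exact: ltNy0.
  apply/esum_eqyP; last by exists j; rewrite completion_j.
  by move=> i _; have := release_le_completion i; case: (completion _ _ i).
pose c j := fine (completion (fun=> 1%R) s j).
have completionE j : completion (fun=> 1%R) s j = (c j)%:E.
  rewrite /c fineK //; have := release_le_completion j.
  case E: (completion _ _ j) => [x| |] //= _.
  by exfalso; apply: finite_completions; exists j.
(* the slack [d] is spread over the [n] jobs, so it costs at most [e] in total *)
apply/lee_addgt0Pr => e e_gt0.
have n1_gt0 : 0 < n%:R + 1 :> R by rewrite ltr_pwDr // ler0n.
have d_gt0 : 0 < e / (n%:R + 1) by rewrite divr_gt0.
apply: le_trans (cost_ge_with_slack completionE d_gt0) _.
rewrite /cost -(addeA (energy 2 s)) leeD2l //.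
under [X in (_ <= X + _)%E]eq_bigr do rewrite completionE -EFinB.
rewrite !sumEFin -EFinD lee_fin.
under eq_bigr do rewrite -addrA (addrC (e / _)) addrA.
rewrite big_split /= sumr_const card_ord lerD2l -[_ *+ n]mulr_natr mulrAC -mulrA.
have : n%:R / (n%:R + 1) <= 1 :> R by rewrite ler_pdivrMr //; lra.
by move: e_gt0; nra.
Qed.

End LowerBound.

Lemma OPT_ge (R : realType) n (t : R) :
  ((sqrt_antider n%:R *+ 2)%:E <= OPT 2 (fun _ : 'I_n => t) (fun=> 1%R))%E.
Proof. by apply/ereal_infP => _ [s s_feasible <-]; exact: cost_ge. Qed.

Lemma OPT_le (R : realType) n (t : R) :
  (OPT 2 (fun _ : 'I_n => t) (fun=> 1%R) <=
   (sqrt_antider n%:R *+ 2 + 2 * Num.sqrt n%:R)%:E)%E.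
Proof.
apply: le_trans (ereal_inf_lbound _) _.
  by exists (@seq_schedule R n t) => //; exact: seq_schedule_feasible.
apply: le_trans (seq_cost_le _ _) _; rewrite lee_fin.
by have := @sum_seq_speed_le R n; lra.
Qed.

Theorem lemma4 (R : realType) (t : R) (ht : 0 <= t) :
  (forall n : nat,
     Order.le ((4 / 3 * (n%:R `^ (3 / 2)))%:E)
              (OPT 2 (fun _ : 'I_n => t) (fun _ : 'I_n => 1))) /\
  (forall eps : R, 0 < eps ->
     exists N : nat, forall n : nat, (N <= n)%N ->
       Order.le (OPT 2 (fun _ : 'I_n => t) (fun _ : 'I_n => 1))
                ((4 / 3 * (n%:R `^ (3 / 2)) + eps * (n%:R `^ (3 / 2)))%:E)).
Proof.
split=> [n|eps eps_gt0]; first by rewrite -sqrt_antider_twice //; exact: OPT_ge.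
have two_div_eps_ge0 : 0 <= 2 / eps by rewrite divr_ge0 // ltW.
exists (Num.Def.archi_bound (2 / eps)) => n le_Nn.
apply: le_trans (OPT_le n t) _.
rewrite sqrt_antider_twice // lee_fin lerD2l powR_3half //.
have two_le_eps_n : 2 <= eps * n%:R.
  have : 2 / eps < n%:R.
    by apply: lt_le_trans (archi_boundP two_div_eps_ge0) _; rewrite ler_nat.
  by rewrite ltr_pdivrMr // mulrC => /ltW.
by have := sqrtr_ge0 (n%:R : R); nra.
Qed.
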